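(* Let $(p_n)_{n\ge1}$ be a sequence in $[0,1]$ with $p_n \gg \frac{1}{n^3}$, i.e. $\lim_{n\to\infty} n^3 p_n = \infty$. Let $G_n$ be the Erdős–Rényi random graph on the vertex set $\mathcal C^0_n$ (with $N_n=|\mathcal C^0_n|$ vertices) with edge probability $p_n$, and let $R_n$ be the reaction network associated to $G_n$. Then \[ \lim_{n\to\infty}\mathbb P(\delta_{R_n}=0)=0 . \]
   Context: A reaction network on species $S_1,\dots,S_n$ consists of a finite set $\mathcal R$ of reactions $y\to y'$ where $y\neq y'$ are complexes, i.e. vectors in $\mathbb Z^n_{\ge0}$; $\mathcal C$ is the set of complexes appearing in some reaction. Its graph has vertex set $\mathcal C$ and a directed edge $y\to y'$ for each reaction; $\ell$ denotes the number of connected components of this graph (ignoring edge directions), $s=\dim\operatorname{span}\{y'-y: y\to y'\in\mathcal R\}$, and the deficiency is $\delta=|\mathcal C|-\ell-s$ (the empty network, with no reactions, has $\delta=0$). Let $e_i$ be the $i$-th standard basis vector of $\mathbb Z^n$ and $\mathcal C^0_n=\{0\}\cup\{e_i:1\le i\le n\}\cup\{e_i+e_j:1\le i\le j\le n\}$, so $N_n=|\mathcal C^0_n|=\frac{n^2+3n+2}{2}$. $G_n$ is the Erdős–Rényi random graph on vertex set $\mathcal C^0_n$ in which each of the $\binom{N_n}{2}$ possible undirected edges is present independently with probability $p_n$. The associated reaction network $R_n$ has species $S_1,\dots,S_n$, complex set equal to the set of vertices of $G_n$ of positive degree, and for each edge $\{y,y'\}$ of $G_n$ the two reactions $y\to y'$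 and $y'\to y$. $\delta_{R_n}$ denotes the deficiency of $R_n$. *)

From HB Require Import structures.
From mathcomp Require Import all_boot all_order all_algebra.
From Stdlib Require Import Reals.
Set Implicit Arguments. Unset Strict Implicit. Unset Printing Implicit Defensive.

(* Complexes with entries in {0,1,2} (enough to contain C^0_n); a complex
   is a vector y : 'I_n -> 'I_3, read as an element of Z_{>=0}^n. *)
Definition cplx (n : nat) := {ffun 'I_n -> 'I_3}.

Definition zero_cplx (n : nat) : cplx n := [ffun _ => inord 0].
Definition e_cplx (n : nat) (i : 'I_n) : cplx n :=
  [ffun k => inord (i == k)].
Definition ee_cplx (n : nat) (i j : 'I_n) : cplx n :=
  [ffun k => inord ((i == k) + (j == k))].

Definition C0 (n : nat) : {set cplx n} :=
  [set zero_cplx n] :|: [set e_cplx i | i : 'I_n]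
    :|: [set ee_cplx ij.1 ij.2 | ij : 'I_n * 'I_n & (ij.1 <= ij.2)%N].

Definition pedges (n : nat) : {set {set cplx n}} :=
  [set e : {set cplx n} | (e \subset C0 n) && (#|e| == 2)%N].

(* A graph G on C^0_n is given by its edge set E \subset pedges n. *)

(* Complexes of the associated network = vertices of positive degree. *)
Definition net_complexes (n : nat) (E : {set {set cplx n}}) : {set cplx n} :=
  cover E.

Definition adj (n : nat) (E : {set {set cplx n}}) : rel (cplx n) :=
  fun x y => [set x; y] \in E.

Definition n_linkage (n : nat) (E : {set {set cplx n}}) : nat :=
  #|[set [set y in net_complexes E | connect (adj E) x y]
       | x in net_complexes E]|.

Local Open Scope ring_scope.
Definition rvec (n : nat) (y y' : cplx n) : 'rV[rat]_n :=
  \row_k ((nat_of_ord (y' k))%:R - (nat_of_ord (y k))%:R).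

(* s = dim span {y' - y : y -> y' reaction}; reactions are both
   orientations of every edge. *)
Definition stoich_rank (n : nat) (E : {set {set cplx n}}) : nat :=
  \rank (\sum_(r : cplx n * cplx n | [set r.1; r.2] \in E)
           <<rvec r.1 r.2>>)%MS.

Definition deficiency (n : nat) (E : {set {set cplx n}}) : int :=
  #|net_complexes E|%:Z - (n_linkage E)%:Z - (stoich_rank E)%:Z.
Local Close Scope ring_scope.

Definition ER_weight (n : nat) (p : R) (E : {set {set cplx n}}) : R :=
  Rmult (pow p #|E|) (pow (Rminus 1 p) (#|pedges n| - #|E|)).

Definition prob_def0 (n : nat) (p : R) : R :=
  \big[Rplus/R0]_(E : {set {set cplx n}} |
                     (E \subset pedges n) && (deficiency E == Posz 0))
     ER_weight p E.

(* A reaction network of deficiency zero has at most 2n complexes: every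
   linkage class contains at least two complexes, so |C| - l >= |C|/2, while the
   stoichiometric rank is at most n.  Split C^0_n into halves S and T, each of
   size about N_n/2 >= n^2/4.  At most 2n vertices of S are then covered by
   edges, so at least |S| - 2n of them are isolated from T.  The number of such
   vertices has mean |S| - mu, where mu = |S|(1 - (1-p)^|T|), and, the stars
   from distinct vertices of S to T being disjoint, variance at most mu.  Since
   n^3 p -> oo forces mu >> n, Chebyshev's inequality bounds the probability of
   at least |S| - 2n isolated vertices by mu / (mu - 2n)^2 -> 0. *)

From HB Require Import structures.
From mathcomp Require Import all_boot all_order all_algebra.
From mathcomp Require Import Rstruct.
From Stdlib Require Import Reals.
From mathcomp Require Import zify ring lra.
Set Implicit Arguments. Unset Strict Implicit. Unset Printing Implicit Defensive.
Import Order.TTheory GRing.Theory Num.Theory.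

Section LinkageClasses.
Variables (n : nat) (E : {set {set cplx n}}).
Hypothesis sE : E \subset pedges n.

Lemma adj_sym : symmetric (adj E).
Proof. by move=> x y; rewrite /adj setUC. Qed.

(* Every complex lies on an edge, so each linkage class has at least two elements. *)
Lemma n_linkage_le_half : (2 * n_linkage E <= #|net_complexes E|)%nat.
Proof.
have eqR : {in net_complexes E & &, equivalence_rel (connect (adj E))}.
  move=> x y z _ _ _; split; first exact: connect0.
  move=> Rxy; apply/idP/idP => Rxz; last exact: connect_trans Rxy Rxz.
  by apply: connect_trans Rxz; rewrite (sym_connect_sym adj_sym).
have partE := equivalence_partitionP eqR.
rewrite /n_linkage (card_partition partE) -/(equivalence_partition _ _).
rewrite mulnC -sum_nat_const; apply: leq_sum => B /imsetP [x xC ->].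
have /bigcupP [e eE xe] := xC.
have /subsetP/(_ _ eE) := sE; rewrite inE => /andP [_ /cards2P [a [b [ab def_e]]]].
have [y [xy def_xy]] : exists y, x != y /\ [set x; y] = e.
  move: xe; rewrite def_e !inE => /orP [] /eqP ->; first by exists b.
  by exists a; rewrite eq_sym setUC.
have yC : y \in net_complexes E.
  by apply/bigcupP; exists e => //; rewrite -def_xy !inE eqxx orbT.
apply: (@leq_trans #|[set x; y]|); first by rewrite cards2 xy.
apply: subset_leq_card; apply/subsetP => z.
rewrite !inE => /orP [] /eqP ->; rewrite ?xC ?yC /= ?connect0 //.
by apply: connect1; rewrite /adj def_xy.
Qed.

Lemma deficiency0_card_complexes :
  deficiency E = Posz 0 -> (#|net_complexes E| <= 2 * n)%nat.
Proof.
rewrite /deficiency => def0.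
have := n_linkage_le_half.
have : (stoich_rank E <= n)%nat by apply: rank_leq_col.
move: def0; lia.
Qed.

End LinkageClasses.

Lemma ee_cplxE n (i j k : 'I_n) : ee_cplx i j k = ((i == k) + (j == k))%nat :> nat.
Proof. by rewrite ffunE inordK //; case: (i == k); case: (j == k). Qed.

Lemma ee_cplx_inj n :
  {in [set ij : 'I_n * 'I_n | (ij.1 <= ij.2)%nat] &,
     injective (fun ij : 'I_n * 'I_n => ee_cplx ij.1 ij.2)}.
Proof.
move=> [i j] [i' j']; rewrite !inE /= => le_ij le_ij' eq_ee.
have eq_k k : ((i == k) + (j == k) = (i' == k) + (j' == k))%nat.
  by rewrite -!ee_cplxE eq_ee.
suff [-> ->] : i = i' /\ j = j' by [].
move: (eq_k i) (eq_k j) (eq_k i') (eq_k j') le_ij le_ij'.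
rewrite -!val_eqE /= !eqxx; case: i j i' j' {eq_k eq_ee} => a ? [b ?] [c ?] [d ?] /=.
by repeat case: eqP; try lia; move=> *; split; apply: val_inj => /=; lia.
Qed.

Lemma card_ordered_pairs n :
  (n * n <= 2 * #|[set ij : 'I_n * 'I_n | (ij.1 <= ij.2)%nat]|)%nat.
Proof.
set P := [set ij : 'I_n * 'I_n | _]; set swap := fun ij : 'I_n * 'I_n => (ij.2, ij.1).
have PUswapP : P :|: swap @: P = setT.
  apply/setP => [[i j]]; rewrite !inE /=; case: (leqP i j) => //= lt_ji.
  by apply/imsetP; exists (j, i); rewrite // inE ltnW.
have := cardsU P (swap @: P); rewrite PUswapP cardsT card_prod card_ord.
have := leq_imset_card swap P; lia.
Qed.

Lemma card_C0 n : (n * n <= 2 * #|C0 n|)%nat.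
Proof.
apply: leq_trans (card_ordered_pairs n) _; rewrite leq_mul2l /=.
rewrite -(card_in_imset (ee_cplx_inj (n := n))); apply: subset_leq_card.
apply/subsetP => y /imsetP [ij Pij ->].
by rewrite /C0 inE; apply/orP; right; apply/imsetP; exists ij; rewrite // inE in Pij.
Qed.

Lemma halve_set (T : finType) (D : {set T}) :
  exists S T' : {set T}, [/\ S \subset D, T' \subset D, [disjoint S & T'],
     (#|D| <= 2 * #|S| + 1)%nat & (#|D| <= 2 * #|T'|)%nat].
Proof.
set S := [set x in take (#|D| %/ 2) (enum D)].
have cardS : #|S| = (#|D| %/ 2)%nat.
  rewrite cardsE (card_uniqP (take_uniq _ (enum_uniq _))) size_take -cardE.
  by case: ltnP => //; lia.
have sSD : S \subset D.
  by apply/subsetP => x; rewrite inE => /mem_take; rewrite mem_enum.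
exists S, (D :\: S); split => //; first exact: subsetDl.
- by rewrite disjoint_sym disjoints_subset subsetDr.
- by rewrite cardS; lia.
- by have := cardsID S D; rewrite (setIidPr sSD) cardS; lia.
Qed.

Local Open Scope ring_scope.

Section ErdosRenyi.
Variables (K : realFieldType) (I : finType) (U : {set I}) (p : K).

Definition er_weight (E : {set I}) : K := p ^+ #|E| * (1 - p) ^+ (#|U| - #|E|).

Definition expect (f : {set I} -> K) : K :=
  \sum_(E : {set I} | E \subset U) er_weight E * f E.

Lemma er_weight_ge0 E : 0 <= p <= 1 -> 0 <= er_weight E.
Proof. by case/andP => p_ge0 p_le1; rewrite mulr_ge0 ?exprn_ge0 ?subr_ge0. Qed.

(* Expanding the product of the [p + (1 - p)] over [U] (and of [1 - p] over [A])
   enumerates the edge sets avoiding [A] with their weights. *)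
Lemma expect_disjoint (A : {set I}) :
  A \subset U -> expect (fun E => [disjoint A & E]%:R) = (1 - p) ^+ #|A|.
Proof.
move=> sAU.
pose F i : K := if (i \in U) && (i \notin A) then p else 0.
pose G i : K := if i \in U then 1 - p else 1.
have prodFG : \prod_i (F i + G i) = (1 - p) ^+ #|A|.
  rewrite -prodr_const (big_mkcond (mem A)) /=; apply: eq_bigr => i _.
  rewrite /F /G; case: (boolP (i \in A)) => iA; first by rewrite (subsetP sAU) ?add0r.
  by case: (i \in U); rewrite /= ?add0r ?addr0 // addrC subrK.
rewrite /expect -prodFG bigA_distr big_mkcond /=; apply: eq_bigr => J _.
have [sJU|/subsetPn [i iJ iU]] /= := boolP (J \subset U); last first.
  by rewrite (bigD1 i) //= iJ /F (negbTE iU) mul0r.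
have [dAJ|/pred0Pn [i /andP [/= iA iJ]]] := boolP [disjoint A & J]; last first.
  by rewrite (bigD1 i) //= iJ /F (subsetP sAU) ?iA ?mul0r ?mulr0.
rewrite mulr1 /er_weight; symmetry.
transitivity (\prod_i (if i \in J then p else G i)).
  apply: eq_bigr => i _; have [iJ|//] := boolP (i \in J).
  by rewrite /F (subsetP sJU) //= (disjointFl dAJ iJ).
rewrite (bigID (mem J)) /= (eq_bigr (fun=> p)); last by move=> i ->.
rewrite [X in _ * X](eq_bigr (fun i => if i \in U then 1 - p else 1)); last by move=> i /negbTE ->.
rewrite prodr_const -big_mkcondr prodr_const /=.
congr (_ * _ ^+ _); rewrite -(cardsID J U) (setIidPr sJU) addKn.
by apply: eq_card => i; rewrite -topredE /= !inE andbC.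
Qed.

Lemma expect1 : expect (fun=> 1) = 1.
Proof.
rewrite -[RHS](expr0 (1 - p)) -(cards0 I) -expect_disjoint ?sub0set //.
by apply: eq_bigr => E _; rewrite -setI_eq0 set0I eqxx.
Qed.

Lemma expectD f g : expect (fun E => f E + g E) = expect f + expect g.
Proof. by rewrite -big_split; apply: eq_bigr => E _; rewrite mulrDr. Qed.

Lemma expectZ c f : expect (fun E => c * f E) = c * expect f.
Proof. by rewrite big_distrr; apply: eq_bigr => E _; rewrite mulrCA. Qed.

Lemma expect_sum (J : finType) (S : {set J}) (f : J -> {set I} -> K) :
  expect (fun E => \sum_(j in S) f j E) = \sum_(j in S) expect (f j).
Proof.
by rewrite /expect -exchange_big; apply: eq_bigr => E _; rewrite big_distrr.
Qed.

Lemma chebyshev (f : {set I} -> K) (Q : pred {set I}) (m a : K) :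
  0 <= p <= 1 -> m < a -> (forall E : {set I}, E \subset U -> Q E -> a <= f E) ->
  \sum_(E : {set I} | (E \subset U) && Q E) er_weight E
    <= expect (fun E => (f E - m) ^+ 2) / (a - m) ^+ 2.
Proof.
move=> p01 lt_ma le_af; have am_gt0 : 0 < (a - m) ^+ 2 by rewrite exprn_gt0 ?subr_gt0.
rewrite mulrC -expectZ big_mkcondr /=; apply: ler_sum => E sEU.
have [QE|_] := boolP (Q E); last first.
  by rewrite mulr_ge0 ?er_weight_ge0 // mulr_ge0 ?invr_ge0 ?sqr_ge0.
rewrite -[X in X <= _]mulr1 ler_wpM2l ?er_weight_ge0 // mulrC ler_pdivlMr //.
by rewrite mul1r ler_sqr ?nnegrE; have := le_af E sEU QE; lra.
Qed.

End ErdosRenyi.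

Section IsolatedVertices.
Variables (V : finType) (S T : {set V}).
Hypothesis dST : [disjoint S & T].

Definition star (s : V) : {set {set V}} := [set [set s; t] | t in T].

Definition n_isolated (E : {set {set V}}) : nat :=
  #|[set s in S | [disjoint star s & E]]|.

Lemma card_star s : s \in S -> #|star s| = #|T|.
Proof.
move=> sS; apply: card_in_imset => t t' tT t'T /setP /(_ t').
rewrite !inE eqxx orbT => /orP [/eqP st'|/eqP //].
by move: (disjointFr dST sS); rewrite -st' t'T.
Qed.

Lemma disjoint_star s s' : s \in S -> s' \in S -> s != s' ->
  [disjoint star s & star s'].
Proof.
move=> sS s'S ss'; rewrite -setI_eq0; apply/eqP/setP => e; rewrite !inE.
apply/negP => /andP [/imsetP [t tT ->] /imsetP [t' t'T /setP /(_ s)]].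
rewrite !inE eqxx /= => /esym /orP [/eqP ss''|/eqP st']; first by rewrite ss'' eqxx in ss'.
by move: (disjointFr dST sS); rewrite st' t'T.
Qed.

(* A vertex of [S] that is not isolated from [T] is covered by an edge. *)
Lemma card_le_n_isolated_cover E : (#|S| <= n_isolated E + #|cover E|)%nat.
Proof.
rewrite -(cardsID [set s | [disjoint star s & E]] S) leq_add //.
  by apply: subset_leq_card; apply/subsetP => s; rewrite !inE andbC.
apply: subset_leq_card; apply/subsetP => s; rewrite !inE => /andP [/pred0Pn [e]] /=.
by case/andP => /imsetP [t _ ->] eE _; apply/bigcupP; exists [set s; t]; rewrite // !inE eqxx.
Qed.

Lemma n_isolatedE (K : numDomainType) E :
  (n_isolated E)%:R = \sum_(s in S) [disjoint star s & E]%:R :> K.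
Proof.
rewrite /n_isolated -natr_sum -sum1_card; congr _%:R; rewrite big_mkcond [RHS]big_mkcond.
by apply: eq_bigr => s _; rewrite !inE; case: (s \in S); case: [disjoint _ & _].
Qed.

Variables (K : realFieldType) (U : {set {set V}}) (p : K).
Hypothesis sSTU : forall s t, s \in S -> t \in T -> [set s; t] \in U.

(* The stars of distinct vertices of [S] are disjoint, so the indicators of
   being isolated are pairwise independent. *)
Lemma variance_n_isolated (r := (1 - p) ^+ #|T|) :
  expect U p (fun E => ((n_isolated E)%:R - #|S|%:R * r) ^+ 2)
    = #|S|%:R * (r - r ^+ 2).
Proof.
have star_sub s : s \in S -> star s \subset U.
  by move=> sS; apply/subsetP => e /imsetP [t tT ->]; apply: sSTU.
pose X s (E : {set {set V}}) : K := [disjoint star s & E]%:R.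
have EX s : s \in S -> expect U p (X s) = r.
  by move=> sS; rewrite expect_disjoint ?star_sub ?card_star.
have EXX s s' : s \in S -> s' \in S ->
    expect U p (fun E => X s E * X s' E) = r ^+ 2 + (s == s')%:R * (r - r ^+ 2).
  move=> sS s'S; have [<-|ss'] := eqVneq s s'.
    rewrite mul1r addrC subrK -(EX s sS); apply: eq_bigr => E _.
    by rewrite /X -natrM mulnb andbb.
  transitivity (expect U p (fun E => [disjoint star s :|: star s' & E]%:R)).
    apply: eq_bigr => E _; rewrite /X -natrM mulnb -disjointU.
    by congr (_ * (nat_of_bool _)%:R); apply: eq_disjoint => e; rewrite !inE.
  rewrite expect_disjoint ?subUset ?star_sub // cardsU.
  by rewrite (disjoint_setI0 (disjoint_star sS s'S ss')) cards0 subn0 !card_star // exprD mul0r addr0.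
have EY : expect U p (fun E => (n_isolated E)%:R) = #|S|%:R * r.
  transitivity (expect U p (fun E => \sum_(s in S) X s E)).
    by apply: eq_bigr => E _; rewrite n_isolatedE.
  rewrite expect_sum (eq_bigr (fun=> r)); last by move=> s /EX.
  by rewrite sumr_const mulr_natl.
have EYY : expect U p (fun E => (n_isolated E)%:R * (n_isolated E)%:R)
    = #|S|%:R * (#|S|%:R * r ^+ 2 + (r - r ^+ 2)).
  transitivity (expect U p (fun E => \sum_(s in S) \sum_(s' in S) X s E * X s' E)).
    apply: eq_bigr => E _; congr (_ * _); rewrite !(n_isolatedE K) mulr_suml.
    by apply: eq_bigr => s _; rewrite mulr_sumr.
  rewrite expect_sum (eq_bigr (fun=> #|S|%:R * r ^+ 2 + (r - r ^+ 2))).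
    by rewrite sumr_const [RHS]mulr_natl.
  move=> s sS; rewrite expect_sum (eq_bigr _ (fun s' s'S => EXX s s' sS s'S)).
  rewrite big_split /= sumr_const mulr_natl -big_distrl /= (bigD1 s) //= eqxx.
  by rewrite big1 => [|s' /andP [_ /negbTE]]; rewrite ?addr0 ?mul1r // eq_sym => ->.
transitivity (expect U p (fun E => (n_isolated E)%:R * (n_isolated E)%:R
    + ((- 2 * #|S|%:R * r) * (n_isolated E)%:R + (#|S|%:R * r) ^+ 2 * 1))).
  by apply: eq_bigr => E _; congr (_ * _); ring.
by rewrite !expectD !expectZ expect1 EY EYY; ring.
Qed.

End IsolatedVertices.

Lemma pair_in_pedges n (s t : cplx n) :
  s \in C0 n -> t \in C0 n -> s != t -> [set s; t] \in pedges n.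
Proof. by move=> sC tC st; rewrite inE subUset !sub1set sC tC cards2 st. Qed.

Lemma deficiency0_n_isolated n (S T : {set cplx n}) (E : {set {set cplx n}}) :
  E \subset pedges n -> deficiency E = Posz 0 ->
  (#|S| <= n_isolated S T E + 2 * n)%nat.
Proof.
move=> sE /(deficiency0_card_complexes sE) le_C.
by apply: leq_trans (card_le_n_isolated_cover S T E) _; rewrite leq_add2l.
Qed.

Section Bernoulli.
Variables (K : realFieldType) (p : K).
Hypothesis p01 : 0 <= p <= 1.

Lemma exprn_1subr_ge0 t : 0 <= (1 - p) ^+ t.
Proof. by rewrite exprn_ge0 // subr_ge0; case/andP: p01. Qed.

Lemma exprn_1subr_le1 t : (1 - p) ^+ t <= 1.
Proof. by rewrite exprn_ile1 // ?subr_ge0 ?lerBlDr ?lerDl; case/andP: p01. Qed.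

Lemma bernoulli_ineq t : (1 - p) ^+ t * (1 + p * t%:R) <= 1.
Proof.
have [p_ge0 p_le1] := andP p01.
elim: t => [|t IH]; first by rewrite expr0 mulr0 addr0 mulr1.
have := exprn_1subr_ge0 t; have := exprn_1subr_le1 t; rewrite exprS -natr1; nra.
Qed.

Lemma expected_non_isolated_ge (n s t : nat) (c : K) :
  0 <= c -> (n * n <= 4 * s + 2)%nat -> (n * n <= 4 * t)%nat ->
  8 * c + 2 <= n%:R -> 64 * c <= n%:R ^+ 3 * p ->
  c * n%:R <= s%:R * (1 - (1 - p) ^+ t).
Proof.
move=> c_ge0 + + hn hpn; rewrite -!(ler_nat K) !natrD !natrM => hs ht.
have [p_ge0 p_le1] := andP p01.
have := bernoulli_ineq t; have := exprn_1subr_ge0 t; have := exprn_1subr_le1 t.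
set r := (1 - p) ^+ t; set N := n%:R in hs ht hn hpn *.
move: hs ht; set S := s%:R; set T := t%:R => hs ht r_le1 r_ge0 bern.
have N_ge2 : 2 <= N by lra.
have pNN : p * N * N <= 4 * (p * T) by nra.
rewrite !exprS expr0 mulr1 !mulrA in hpn.
have [pT_ge1|pT_lt1] := lerP 1 (p * T).
  have : 1 <= 2 * (1 - r) by nra.
  nra.
have : p * T <= 2 * (1 - r) by nra.
have : N * N <= 8 * S by nra.
nra.
Qed.

End Bernoulli.

Lemma prob_def0E n (p : R) : prob_def0 n p =
  \sum_(E : {set {set cplx n}} | (E \subset pedges n) && (deficiency E == Posz 0))
     er_weight (pedges n) p E.
Proof. by apply: eq_bigr => E _; rewrite /ER_weight /er_weight !RpowE. Qed.

Lemma prob_def0_ge0 n (p : R) : 0 <= p <= 1 -> 0 <= prob_def0 n p.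
Proof. by move=> p01; rewrite prob_def0E sumr_ge0 // => E _; apply: er_weight_ge0. Qed.

Lemma prob_def0_le n (p c : R) : 0 <= p <= 1 -> 4 <= c ->
  8 * c + 2 <= n%:R -> 64 * c <= n%:R ^+ 3 * p -> prob_def0 n p <= 4 / c.
Proof.
move=> p01 c_ge4 hn hpn.
have [S [T [sS sT dST hS hT]]] := halve_set (C0 n).
have sSTU s t : s \in S -> t \in T -> [set s; t] \in pedges n.
  move=> sS' tT; apply: pair_in_pedges; [exact: (subsetP sS) | exact: (subsetP sT) |].
  by apply/eqP => st; move: (disjointFr dST sS'); rewrite st tT.
have nnC0 := card_C0 n.
have := expected_non_isolated_ge p01 (c := c) (s := #|S|) (t := #|T|).
have := exprn_1subr_ge0 p01 #|T|; have := exprn_1subr_le1 p01 #|T|.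
set r := (1 - p) ^+ #|T| => r_le1 r_ge0 hmu.
have {hmu} hmu : c * n%:R <= #|S|%:R * (1 - r) by apply: hmu => //; [lra|lia|lia].
have le_isolated (E : {set {set cplx n}}) : E \subset pedges n -> deficiency E == Posz 0 ->
    #|S|%:R - 2 * n%:R <= (n_isolated S T E)%:R :> R.
  move=> sE /eqP /(deficiency0_n_isolated S T sE).
  by rewrite -(ler_nat R) natrD natrM lerBlDr.
set mu := #|S|%:R * (1 - r) in hmu.
have n_ge1 : 1 <= n%:R :> R by lra.
have mu_ge : 4 * n%:R <= mu by apply: le_trans hmu; rewrite ler_wpM2r ?ler0n.
have lt_mean : #|S|%:R * r < #|S|%:R - 2 * n%:R by rewrite /mu in mu_ge; lra.
have := chebyshev p01 lt_mean le_isolated.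
rewrite -prob_def0E variance_n_isolated // => /le_trans; apply.
have -> : #|S|%:R - 2 * n%:R - #|S|%:R * r = mu - 2 * n%:R by rewrite /mu; ring.
have -> : #|S|%:R * (r - r ^+ 2) = mu * r by rewrite /mu; ring.
rewrite ler_pdivrMr; last by rewrite exprn_gt0 // subr_gt0; lra.
rewrite [X in _ <= X]mulrAC ler_pdivlMr; last by lra.
have mu_ge0 : 0 <= mu by lra.
have c_le_mu : c <= mu by apply: le_trans hmu; rewrite ler_peMr; lra.
have : mu * r * c <= mu * mu by rewrite -mulrA ler_wpM2l //; nra.
have : mu <= 2 * (mu - 2 * n%:R) by lra.
nra.
Qed.

Theorem mainTheorem1 (p : nat -> R)
  (hp : forall n, (0 <= p n <= 1)%R)
  (hlim : cv_infty (fun n => (INR n ^ 3 * p n)%R)) :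
  Un_cv (fun n => prob_def0 n (p n)) 0%R.
Proof.
have p01 n : 0 <= p n <= 1 by case: (hp n) => /RleP -> /RleP.
move=> eps /RltP eps_gt0; have {}eps_gt0 : 0 < eps by [].
pose c := 4 + 4 / eps.
have c_ge4 : 4 <= c by rewrite /c lerDl divr_ge0 // ltW.
pose M := 64 * c; have [N1 hN1] := hlim M.
have bound_ge0 : 0 <= 8 * c + 2 by lra.
exists (maxn N1 (Num.bound (8 * c + 2))) => n /ssrnat.leP; rewrite geq_max => /andP [le_N1 le_bn].
rewrite RdistE subr0 ger0_norm ?prob_def0_ge0 //; apply/RltP.
apply: (le_lt_trans (prob_def0_le (p01 n) c_ge4 _ _)).
- apply: le_trans (ltW (archi_boundP bound_ge0)) _; by rewrite ler_nat.
- by apply/ltW/RltP; rewrite -(INRE n) -RpowE; apply: hN1; apply/ssrnat.leP.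
- rewrite ltr_pdivrMr ?(lt_le_trans _ c_ge4) // /c mulrDr mulrCA divff ?gt_eqF // mulr1; lra.
Qed.
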